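(* Let $n,d\ge1$. For $k\ge1$ let $\mathbf M_k\in\mathbb R^{n\times n}$ be invertible; for $k\ge0$ let $\mathbf H_k\in\mathbb R^{d\times n}$, $\mathbf R_k\in\mathbb R^{d\times d}$ symmetric positive definite and ${\boldsymbol\Omega}_k=\mathbf H_k^{\mathrm T}\mathbf R_k^{-1}\mathbf H_k$. Let $\mathbf M_{k:l}=\mathbf M_k\cdots\mathbf M_{l+1}$ ($\mathbf M_{k:k}=\mathbf I_n$), let $\mathbf P_0$ be symmetric positive semi-definite and $\mathbf P_{k+1}=\mathbf M_{k+1}(\mathbf I_n+\mathbf P_k{\boldsymbol\Omega}_k)^{-1}\mathbf P_k\mathbf M_{k+1}^{\mathrm T}$ for $k\ge0$. Let ${\boldsymbol\Gamma}_k=\sum_{l=0}^{k-1}\mathbf M_{k:l}^{-\mathrm T}{\boldsymbol\Omega}_l\mathbf M_{k:l}^{-1}$. If $\det({\boldsymbol\Gamma}_k)\neq0$, then $\mathbf P_k\le{\boldsymbol\Gamma}_k^{-1}$, and hence $$\mathbf P_k\le\min\big\{\mathbf M_{k:0}\mathbf P_0\mathbf M_{k:0}^{\mathrm T},\,{\boldsymbol\Gamma}_k^{-1}\big\}.$$ Consequently, if there is a symmetric positive definite $\mathbf L$ with ${\boldsymbol\Gamma}_k\ge\mathbf L$, then $\mathbf P_k\le\mathbf L^{-1}$.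
   Context: $\mathbf A\le\mathbf B$ denotes the Loewner order (${\mathbf x}^{\mathrm T}\mathbf A{\mathbf x}\le{\mathbf x}^{\mathrm T}\mathbf B{\mathbf x}$ for all ${\mathbf x}$). For symmetric positive semi-definite $\mathbf A,\mathbf B,\mathbf C$, the statement $\mathbf A\le\min\{\mathbf B,\mathbf C\}$ means ${\mathbf x}^{\mathrm T}\mathbf A{\mathbf x}\le\min\{{\mathbf x}^{\mathrm T}\mathbf B{\mathbf x},{\mathbf x}^{\mathrm T}\mathbf C{\mathbf x}\}$ for all ${\mathbf x}\in\mathbb R^n$. *)

From HB Require Import structures.
From mathcomp Require Import all_boot all_order all_algebra.
From mathcomp Require Import reals.
Set Implicit Arguments. Unset Strict Implicit. Unset Printing Implicit Defensive.
Import Order.TTheory GRing.Theory Num.Theory.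
Local Open Scope ring_scope.

Section Defs.
Variable R : realType.

Definition qform n (A : 'M[R]_n) (x : 'cV[R]_n) : R := (x^T *m A *m x) ord0 ord0.

Definition loewner_le n (A B : 'M[R]_n) : Prop :=
  forall x : 'cV[R]_n, qform A x <= qform B x.

Definition loewner_le_min n (A B C : 'M[R]_n) : Prop :=
  forall x : 'cV[R]_n, qform A x <= Num.min (qform B x) (qform C x).

Definition symmetric n (A : 'M[R]_n) : Prop := A^T = A.

Definition psd n (A : 'M[R]_n) : Prop :=
  symmetric A /\ forall x : 'cV[R]_n, 0 <= qform A x.

Definition pd n (A : 'M[R]_n) : Prop :=
  symmetric A /\ forall x : 'cV[R]_n, x != 0 -> 0 < qform A x.

Definition Omega n d (H : nat -> 'M[R]_(d, n)) (Rm : nat -> 'M[R]_d) (k : nat)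
  : 'M[R]_n := (H k)^T *m invmx (Rm k) *m H k.

Fixpoint mprod_aux n (M : nat -> 'M[R]_n) (l m : nat) : 'M[R]_n :=
  match m with
  | 0 => 1%:M
  | m'.+1 => M (l + m'.+1)%N *m mprod_aux M l m'
  end.

(* M_{k:l} = M_k ... M_{l+1}, M_{k:k} = I (used for l <= k) *)
Definition Mprod n (M : nat -> 'M[R]_n) (k l : nat) : 'M[R]_n :=
  mprod_aux M l (k - l).

Fixpoint Pseq n d (M : nat -> 'M[R]_n) (H : nat -> 'M[R]_(d, n))
  (Rm : nat -> 'M[R]_d) (P0 : 'M[R]_n) (k : nat) : 'M[R]_n :=
  match k with
  | 0 => P0
  | k'.+1 => M k'.+1 *m invmx (1%:M + Pseq M H Rm P0 k' *m Omega H Rm k')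
               *m Pseq M H Rm P0 k' *m (M k'.+1)^T
  end.

Definition Gamma n d (M : nat -> 'M[R]_n) (H : nat -> 'M[R]_(d, n))
  (Rm : nat -> 'M[R]_d) (k : nat) : 'M[R]_n :=
  \sum_(l < k) (invmx (Mprod M k l))^T *m Omega H Rm l *m invmx (Mprod M k l).

End Defs.

From HB Require Import structures.
From mathcomp Require Import all_boot all_order all_algebra.
From mathcomp Require Import reals lra.
Import Order.TTheory GRing.Theory Num.Theory.
Local Open Scope ring_scope.

(* The proof carries the invariant P_k^T Gamma_k P_k <= P_k, which is trivial
   for k = 0 since Gamma_0 = 0.  For one step put A = (I + P Omega)^-1 P; every
   x can be written x = (I + Omega P) y, and then A x = P y and
   x^T A x = y^T P y + (P y)^T Omega (P y).  Hence the invariant for P gives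
   A^T (Gamma + Omega) A <= A, and conjugating by M_(k+1) (with
   Gamma_(k+1) = M_(k+1)^-T (Gamma_k + Omega_k) M_(k+1)^-1) gives it for
   P_(k+1).  When Gamma is invertible, expanding
   0 <= (P x - Gamma^-1 x)^T Gamma (P x - Gamma^-1 x) turns the invariant into
   P <= Gamma^-1.  The same change of variables shows A <= P, whence
   P_k <= M_(k:0) P_0 M_(k:0)^T, and the bound by L^-1 is the antitonicity of
   matrix inversion. *)

Lemma invmx_mul (R : comUnitRingType) n (A B : 'M[R]_n) :
  A \in unitmx -> B \in unitmx -> invmx (A *m B) = invmx B *m invmx A.
Proof.
move=> Au Bu; have ABu : A *m B \in unitmx by rewrite unitmx_mul Au.
rewrite -[RHS](mulKmx ABu) -(mulmxA A) (mulmxA B) mulmxV // mul1mx.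
by rewrite mulmxV // mulmx1.
Qed.

Section Riccati.
Set Implicit Arguments.
Unset Strict Implicit.
Variable R : realType.

Section QuadraticForms.
Variable n : nat.
Implicit Types (A B C G P : 'M[R]_n) (x y z : 'cV[R]_n).

Definition bform A x y : R := (x^T *m A *m y) ord0 ord0.

Lemma qformE A x : qform A x = bform A x x. Proof. by []. Qed.

Lemma bformDl A x y z : bform A (x + y) z = bform A x z + bform A y z.
Proof. by rewrite /bform linearD /= !mulmxDl mxE. Qed.

Lemma bformDr A x y z : bform A x (y + z) = bform A x y + bform A x z.
Proof. by rewrite /bform mulmxDr mxE. Qed.

Lemma bformNr A x y : bform A x (- y) = - bform A x y.
Proof. by rewrite /bform mulmxN mxE. Qed.

Lemma bformZr A t x y : bform A x (t *: y) = t * bform A x y.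
Proof. by rewrite /bform -scalemxAr mxE. Qed.

Lemma bform_mulmxr A B x y : bform A x (B *m y) = bform (A *m B) x y.
Proof. by rewrite /bform !mulmxA. Qed.

Lemma bform_mulmx A B C x y :
  bform A (B *m x) (C *m y) = bform (B^T *m A *m C) x y.
Proof. by rewrite /bform trmx_mul !mulmxA. Qed.

Lemma bform_tr A x y : bform A^T x y = bform A y x.
Proof.
rewrite /bform -[in RHS](trmxK (y^T *m A *m x)) [in RHS]mxE.
by rewrite !trmx_mul !trmxK mulmxA.
Qed.

Lemma qformDl A B x : qform (A + B) x = qform A x + qform B x.
Proof. by rewrite /qform mulmxDr mulmxDl mxE. Qed.

Lemma qform_tr A x : qform A^T x = qform A x.
Proof. exact: bform_tr. Qed.

Lemma qform_mulmx m (A : 'M[R]_m) (B : 'M[R]_(m, n)) x :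
  qform (B^T *m A *m B) x = qform A (B *m x).
Proof. by rewrite /qform trmx_mul !mulmxA. Qed.

Lemma qformZ t A x : qform A (t *: x) = t ^+ 2 * qform A x.
Proof.
by rewrite /qform !linearZ /= -!scalemxAl scalerA mxE -expr2.
Qed.

Lemma qform0 x : qform 0 x = 0.
Proof. by rewrite /qform mulmx0 mul0mx mxE. Qed.

Lemma qformD_sym A x y : symmetric A ->
  qform A (x + y) = qform A x + 2 * bform A x y + qform A y.
Proof.
move=> As; rewrite qformE bformDl !bformDr -!qformE -[bform A y x]bform_tr As.
lra.
Qed.

Lemma qformB_sym A x y : symmetric A ->
  qform A (x - y) = qform A x - 2 * bform A x y + qform A y.
Proof.
move=> As; rewrite qformD_sym // bformNr /qform mulmxN.
by rewrite (linearN (@trmx R n 1)) !mulNmx opprK; lra.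
Qed.

Lemma loewner_le_trans B A C :
  loewner_le A B -> loewner_le B C -> loewner_le A C.
Proof. by move=> AB BC x; apply: le_trans (AB x) (BC x). Qed.

Lemma loewner_le_conj C A B :
  loewner_le A B -> loewner_le (C^T *m A *m C) (C^T *m B *m C).
Proof. by move=> AB x; rewrite !qform_mulmx. Qed.

Lemma psd_conj m (A : 'M[R]_m) (C : 'M[R]_(m, n)) :
  psd A -> psd (C^T *m A *m C).
Proof.
case=> As Ap; split=> [|x]; last by rewrite qform_mulmx.
by rewrite /symmetric !trmx_mul trmxK As mulmxA.
Qed.

Lemma psdD A B : psd A -> psd B -> psd (A + B).
Proof.
case=> As Ap [Bs Bp]; split=> [|x].
  by rewrite /symmetric linearD /= As Bs.
by rewrite qformDl addr_ge0.
Qed.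

Lemma pd_psd A : pd A -> psd A.
Proof.
case=> As Ap; split=> // x; have [->|/Ap/ltW //] := eqVneq x 0.
by rewrite /qform mulmx0 mxE.
Qed.

Lemma pd_unitmx A : pd A -> A \in unitmx.
Proof.
case=> _ Ap; rewrite unitmxE unitfE; apply/negP => /det0P [v v_neq0 vA].
have := Ap v^T; rewrite trmx_eq0 => /(_ v_neq0).
by rewrite /qform trmxK vA mul0mx mxE ltxx.
Qed.

Lemma pd_loewner_le A B : pd A -> symmetric B -> loewner_le A B -> pd B.
Proof. by case=> _ Ap Bs AB; split=> // x /Ap/lt_le_trans; apply. Qed.

Lemma psd_invmx A : psd A -> A \in unitmx -> psd (invmx A).
Proof.
case=> As Ap Au; split=> [|x]; first by rewrite /symmetric trmx_inv As.
have -> : invmx A = (invmx A)^T *m A *m invmx A.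
  by rewrite trmx_inv As mulmxK.
by rewrite qform_mulmx.
Qed.

Lemma psd_qform_eq0 P z : psd P -> qform P z = 0 -> P *m z = 0.
Proof.
case=> Ps Pp qz.
have bz y : bform P y z = 0.
  set b := bform P y z; set q := qform P y.
  have q_ge0 : 0 <= q := Pp y.
  have Ht t : 0 <= 2 * t * b + t ^+ 2 * q.
    have := Pp (z + t *: y).
    rewrite qformD_sym // qz bformZr -[bform P z y]bform_tr Ps qformZ -/b -/q.
    lra.
  (* for this t the right-hand side of Ht is -t^2 (q + 2) *)
  have := Ht (- b / (q + 1)); set t := - b / (q + 1).
  have -> : b = - (t * (q + 1)) by rewrite /t divfK ?opprK // gt_eqF //; lra.
  move=> h; have -> : t = 0.
    by apply/eqP; rewrite -sqrf_eq0 eq_le sqr_ge0 andbT; nra.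
  by rewrite mul0r oppr0.
apply/matrixP => i j; rewrite (ord1 j) [RHS]mxE.
by rewrite -(bz (delta_mx i 0)) /bform trmx_delta -mulmxA -rowE [RHS]mxE.
Qed.

Lemma le_invmx_of_conj_le G P : psd G -> G \in unitmx ->
  loewner_le (P^T *m G *m P) P -> loewner_le P (invmx G).
Proof.
case=> Gs Gp Gu PGP x.
have := Gp (P *m x - invmx G *m x).
rewrite qformB_sym // -!qform_mulmx bform_mulmx mulmxK // trmx_inv Gs mulVmx //.
rewrite mul1mx -qformE qform_tr.
by have := PGP x; lra.
Qed.

Lemma loewner_le_invmx A B : psd A -> A \in unitmx ->
  symmetric B -> B \in unitmx ->
  loewner_le A B -> loewner_le (invmx B) (invmx A).
Proof.
move=> A_psd Au Bs Bu AB; apply: le_invmx_of_conj_le A_psd Au _.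
apply: loewner_le_trans (loewner_le_conj (invmx B) AB) _ => x.
by rewrite trmx_inv Bs mulVmx // mul1mx.
Qed.

End QuadraticForms.

Section KalmanUpdate.
Variables (n : nat) (P Om : 'M[R]_n).
Hypotheses (P_psd : psd P) (Om_psd : psd Om).
Implicit Types (G : 'M[R]_n) (y : 'cV[R]_n).

Definition kalman_update : 'M[R]_n := invmx (1%:M + P *m Om) *m P.

Local Notation C := (1%:M + Om *m P).

Lemma trmx_1Dmul : (1%:M + P *m Om)^T = C.
Proof. by rewrite linearD /= trmx1 trmx_mul P_psd.1 Om_psd.1. Qed.

Lemma bform_OmP y : bform P y (Om *m (P *m y)) = qform Om (P *m y).
Proof. by rewrite -qform_mulmx P_psd.1 qformE !bform_mulmxr. Qed.

Lemma unitmx_1Dmul : 1%:M + P *m Om \in unitmx.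
Proof.
rewrite unitmxE unitfE; apply/negP => /det0P [w w_neq0 wC].
set z := w^T; have Cz : z + Om *m (P *m z) = 0.
  have := congr1 trmx wC.
  by rewrite trmx_mul trmx_1Dmul trmx0 mulmxDl mul1mx mulmxA.
have qPz : qform P z = 0.
  have := congr1 (bform P z) Cz.
  rewrite bformDr bform_OmP -qformE /bform mulmx0 mxE.
  by have := P_psd.2 z; have := Om_psd.2 (P *m z); lra.
move: Cz; rewrite (psd_qform_eq0 P_psd qPz) mulmx0 addr0 => /eqP.
by rewrite /z trmx_eq0 (negPf w_neq0).
Qed.

Lemma unitmx_1Dmul_tr : C \in unitmx.
Proof. by rewrite -trmx_1Dmul unitmx_tr unitmx_1Dmul. Qed.

Lemma kalman_update_mulmx : kalman_update *m C = P.
Proof.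
rewrite -mulmxA.
have -> : P *m C = (1%:M + P *m Om) *m P.
  by rewrite mulmxDr mulmxDl mulmx1 mul1mx mulmxA.
by rewrite mulKmx // unitmx_1Dmul.
Qed.

Lemma kalman_update_mulmx_vec y : kalman_update *m (C *m y) = P *m y.
Proof. by rewrite mulmxA kalman_update_mulmx. Qed.

Lemma kalman_update_sym : symmetric kalman_update.
Proof.
have AE : kalman_update = P *m invmx C.
  exact: canRL (mulmxK unitmx_1Dmul_tr) kalman_update_mulmx.
by rewrite /symmetric {1}AE trmx_mul trmx_inv -trmx_1Dmul trmxK P_psd.1.
Qed.

Lemma kalman_update_qform y :
  qform kalman_update (C *m y) = qform P y + qform Om (P *m y).
Proof.
have -> : qform kalman_update (C *m y) = bform P (C *m y) y.
  by rewrite /qform /bform -mulmxA kalman_update_mulmx_vec mulmxA.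
rewrite mulmxDl mul1mx -mulmxA bformDl -qformE.
by rewrite -[bform P (Om *m _) y]bform_tr P_psd.1 bform_OmP.
Qed.

Lemma qform_1Dmul y : qform P (C *m y) =
  qform P y + 2 * qform Om (P *m y) + qform P (Om *m (P *m y)).
Proof.
by rewrite mulmxDl mul1mx -mulmxA qformD_sym ?bform_OmP //; case: P_psd.
Qed.

Lemma kalman_update_psd : psd kalman_update.
Proof.
split=> [|x]; first exact: kalman_update_sym.
rewrite -(mulKVmx unitmx_1Dmul_tr x) kalman_update_qform.
by rewrite addr_ge0 ?P_psd.2 ?Om_psd.2.
Qed.

Lemma kalman_update_le : loewner_le kalman_update P.
Proof.
move=> x; rewrite -(mulKVmx unitmx_1Dmul_tr x) kalman_update_qform qform_1Dmul.
set y := invmx C *m x.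
by have := Om_psd.2 (P *m y); have := P_psd.2 (Om *m (P *m y)); lra.
Qed.

Lemma kalman_update_conj_le G : loewner_le (P^T *m G *m P) P ->
  loewner_le (kalman_update^T *m (G + Om) *m kalman_update) kalman_update.
Proof.
move=> PGP x; rewrite -(mulKVmx unitmx_1Dmul_tr x).
rewrite qform_mulmx kalman_update_mulmx_vec
qformDl -qform_mulmx kalman_update_qform.
by have := PGP (invmx C *m x); lra.
Qed.

End KalmanUpdate.

Section Propagation.
Variables (n d : nat) (M : nat -> 'M[R]_n) (H : nat -> 'M[R]_(d, n)).
Variables (Rm : nat -> 'M[R]_d) (P0 : 'M[R]_n).
Hypothesis M_unit : forall k, (1 <= k)%N -> M k \in unitmx.
Hypothesis Rm_pd : forall k, pd (Rm k).
Hypothesis P0_psd : psd P0.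

Local Notation Pseq := (Pseq M H Rm P0).
Local Notation Gamma := (Gamma M H Rm).
Local Notation Omega := (Omega H Rm).

Lemma Mprodnn k : Mprod M k k = 1%:M.
Proof. by rewrite /Mprod subnn. Qed.

Lemma MprodSl k l : (l <= k)%N -> Mprod M k.+1 l = M k.+1 *m Mprod M k l.
Proof. by move=> lk; rewrite /Mprod subSn //= addnS subnKC. Qed.

Lemma Mprod_unitmx k l : (l <= k)%N -> Mprod M k l \in unitmx.
Proof.
elim: k => [|k IH]; first by rewrite leqn0 => /eqP ->; rewrite Mprodnn unitmx1.
rewrite leq_eqVlt => /orP [/eqP ->|lk]; first by rewrite Mprodnn unitmx1.
by rewrite MprodSl // unitmx_mul M_unit // IH.
Qed.

Lemma Omega_psd k : psd (Omega k).
Proof. by apply/psd_conj/psd_invmx; [apply: pd_psd | apply: pd_unitmx]. Qed.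

Lemma Gamma0 : Gamma 0 = 0.
Proof. exact: big_ord0. Qed.

Lemma GammaS k :
  Gamma k.+1 = (invmx (M k.+1))^T *m (Gamma k + Omega k) *m invmx (M k.+1).
Proof.
rewrite /Gamma big_ord_recr /= MprodSl // Mprodnn mulmx1 mulmxDr mulmxDl.
congr (_ + _); rewrite mulmx_sumr mulmx_suml; apply: eq_bigr => l _.
have lk : (l <= k)%N := ltnW (ltn_ord l).
by rewrite MprodSl // invmx_mul ?M_unit ?Mprod_unitmx // trmx_mul !mulmxA.
Qed.

Lemma Gamma_psd k : psd (Gamma k).
Proof.
elim: k => [|k IH]; last by rewrite GammaS; apply/psd_conj/psdD/Omega_psd.
by rewrite Gamma0; split=> [|x]; rewrite /symmetric ?trmx0 ?qform0.
Qed.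

Lemma PseqS k :
  Pseq k.+1 = M k.+1 *m kalman_update (Pseq k) (Omega k) *m (M k.+1)^T.
Proof. by rewrite /= !mulmxA. Qed.

Lemma Pseq_psd k : psd (Pseq k).
Proof.
elim: k => [//|k IH]; rewrite PseqS.
have := psd_conj (M k.+1)^T (kalman_update_psd IH (Omega_psd k)).
by rewrite trmxK.
Qed.

Lemma Pseq_le_Mprod k :
  loewner_le (Pseq k) (Mprod M k 0 *m P0 *m (Mprod M k 0)^T).
Proof.
elim: k => [|k IH]; first by rewrite Mprodnn mul1mx trmx1 mulmx1.
have := loewner_le_conj (M k.+1)^T
  (loewner_le_trans (kalman_update_le (Pseq_psd k) (Omega_psd k)) IH).
by rewrite PseqS MprodSl // trmx_mul trmxK !mulmxA.
Qed.

Lemma Pseq_conj_Gamma_le k :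
  loewner_le ((Pseq k)^T *m Gamma k *m Pseq k) (Pseq k).
Proof.
elim: k => [|k IH].
  by rewrite Gamma0 mulmx0 mul0mx => x; rewrite qform0 P0_psd.2.
have := loewner_le_conj (M k.+1)^T
  (kalman_update_conj_le (Pseq_psd k) (Omega_psd k) IH).
rewrite GammaS PseqS !trmx_mul !trmxK trmx_inv !mulmxA.
by rewrite mulmxK ?unitmx_tr ?M_unit // mulmxKV ?M_unit.
Qed.

End Propagation.
End Riccati.

Theorem mainTheorem3 (R : realType) (n d : nat)
  (M : nat -> 'M[R]_n) (H : nat -> 'M[R]_(d, n)) (Rm : nat -> 'M[R]_d)
  (P0 : 'M[R]_n) :
  (0 < n)%N -> (0 < d)%N ->
  (forall k, (1 <= k)%N -> M k \in unitmx) ->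
  (forall k, pd (Rm k)) ->
  psd P0 ->
  forall k : nat,
    (\det (Gamma M H Rm k) != 0 ->
       loewner_le (Pseq M H Rm P0 k) (invmx (Gamma M H Rm k)) /\
       loewner_le_min (Pseq M H Rm P0 k)
         (Mprod M k 0 *m P0 *m (Mprod M k 0)^T) (invmx (Gamma M H Rm k))) /\
    (forall L : 'M[R]_n, pd L -> loewner_le L (Gamma M H Rm k) ->
       loewner_le (Pseq M H Rm P0 k) (invmx L)).
Proof.
move=> _ _ M_unit Rm_pd P0_psd k.
have G_psd := Gamma_psd H M_unit Rm_pd k.
have P_le_invG : \det (Gamma M H Rm k) != 0 ->
    loewner_le (Pseq M H Rm P0 k) (invmx (Gamma M H Rm k)).
  move=> detG; apply: le_invmx_of_conj_le G_psd _ _.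
    by rewrite unitmxE unitfE.
  exact: Pseq_conj_Gamma_le.
split=> [detG | L L_pd L_le_G].
  split=> [|x]; first exact: P_le_invG.
  by rewrite le_min (Pseq_le_Mprod M H Rm_pd P0_psd) (P_le_invG detG).
have G_unit : Gamma M H Rm k \in unitmx.
  exact/pd_unitmx/(pd_loewner_le L_pd G_psd.1 L_le_G).
apply: loewner_le_trans (P_le_invG _) _; first by rewrite -unitfE -unitmxE.
exact: loewner_le_invmx (pd_psd L_pd) (pd_unitmx L_pd) G_psd.1 G_unit L_le_G.
Qed.
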